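(* Let $(X,T),(Y,S)$ be topological dynamical systems, let $y_0\in Y$ and $s_0\in\mathbb{N}$ with $S^{s_0}y_0=y_0$, and let $\nu=\frac1{s_0}\sum_{j=0}^{s_0-1}\delta_{S^jy_0}$. Then $$\mathcal{M}_{T\times S}(X\times Y)\cap(\pi_Y)_*^{-1}\{\nu\}=\Big\{\tfrac1{s_0}\sum_{j=0}^{s_0-1}(T\times S)^j_*(\mu\times\delta_{y_0}):\mu\in\mathcal{M}_{T^{s_0}}(X)\Big\}.$$ Consequently, for every $f\in C(X\times Y)$, $\psi_f(\nu)\ge\min_{x\in X}\frac1{s_0}\sum_{j=0}^{s_0-1}f(T^jx,S^jy_0)$.
   Context: A topological dynamical system $(X,T)$: $X$ compact metrizable, $T$ a homeomorphism; $\mathcal{M}_T(X)$ its invariant Borel probability measures. $\pi_Y(x,y)=y$. $\psi_f(\nu)=\min\{\int f\,d\lambda:\lambda\in\mathcal{M}_{T\times S}(X\times Y),(\pi_Y)_*\lambda=\nu\}$. *)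

From HB Require Import structures.
From mathcomp Require Import all_boot all_order all_algebra.
From mathcomp Require Import all_classical all_reals all_analysis.
Set Implicit Arguments. Unset Strict Implicit. Unset Printing Implicit Defensive.
Import Order.TTheory GRing.Theory Num.Theory.
Import numFieldNormedType.Exports.
Local Open Scope classical_set_scope.
Local Open Scope ring_scope.

HB.instance Definition _ (X Y : ptopologicalType) := Topological.on (X * Y)%type.

Definition borel (T : ptopologicalType) := g_sigma_algebraType (@open T).

Notation Mprob T R := (probability (borel T) R).

(** A topological dynamical system: T compact metrizable (here: a Hausdorff
    pseudometric space, i.e. a metric space), f a homeomorphism. *)
Definition tds (R : realType) (X : pseudoPMetricType R) (f : X -> X) : Prop :=
  compact [set: X] /\ hausdorff_space X /\ continuous f /\
  exists g : X -> X, continuous g /\ cancel f g /\ cancel g f.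

Definition is_invariant (X : ptopologicalType) (R : realType)
  (f : X -> X) (mu : Mprob X R) : Prop :=
  forall A : set (borel X), measurable A -> mu (f @^-1` A) = mu A.

Definition pushf (X Y : Type) (R : realType) (f : X -> Y)
  (mu : set X -> \bar R) : set Y -> \bar R := fun A => mu (f @^-1` A).

(** The product measure mu x delta_{y0} on X x Y, written out:
    (mu x delta_{y0})(A) = mu {x | (x,y0) \in A}. *)
Definition prod_dirac (X Y : Type) (R : realType) (mu : set X -> \bar R)
  (y0 : Y) : set (X * Y) -> \bar R := fun A => mu [set x | A (x, y0)].

Definition prodmap (X Y : Type) (f : X -> X) (g : Y -> Y) : X * Y -> X * Y :=
  fun p => (f p.1, g p.2).

Definition orbit_measure (Y : ptopologicalType) (R : realType) (S : Y -> Y)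
  (y0 : Y) (s0 : nat) : set (borel Y) -> \bar R :=
  fun B => (((s0%:R)^-1)%:E * \sum_(j < s0) (\d_(iter j S y0 : borel Y) : set (borel Y) -> \bar R) B)%E.

Definition orbit_lift (X Y : Type) (R : realType) (T : X -> X) (S : Y -> Y)
  (mu : set X -> \bar R) (y0 : Y) (s0 : nat) : set (X * Y) -> \bar R :=
  fun A => (((s0%:R)^-1)%:E *
    \sum_(j < s0) pushf (iter j (prodmap T S)) (prod_dirac mu y0) A)%E.

Definition in_fiber (R : realType) (X Y : pseudoPMetricType R) (T : X -> X) (S : Y -> Y)
  (nu : set (borel Y) -> \bar R) (lam : Mprob (X * Y)%type R) : Prop :=
  is_invariant (prodmap T S) lam /\
  forall B : set (borel Y), measurable B -> pushf snd lam B = nu B.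

(** psi_f(nu) = min { int f dlam : lam in M_{T x S}(X x Y), (pi_Y)_* lam = nu },
    written as an infimum (the minimum is attained, so they agree). *)
Definition psi (R : realType) (X Y : pseudoPMetricType R) (T : X -> X) (S : Y -> Y)
  (f : X * Y -> R) (nu : set (borel Y) -> \bar R) : \bar R :=
  ereal_inf [set (\int[lam]_z (f z)%:E)%E | lam in [set lam | in_fiber T S nu lam]].

From HB Require Import structures.
From mathcomp Require Import all_boot all_order all_algebra.
From mathcomp Require Import all_classical all_reals all_analysis finmap.
From mathcomp Require Import measurable_realfun ring.
Import Order.TTheory GRing.Theory Num.Theory.
Import numFieldNormedType.Exports.
Local Open Scope classical_set_scope.
Local Open Scope ring_scope.

(** An invariant [lam] over the periodic orbit measure [nu] lives on the fibers
    [X * {S^j y0}], and since [S] is injective the preimage under [(T x S)^j]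
    of the fiber over [S^j y0] is the fiber over [y0].  Hence invariance makes
    all these fibers equally heavy and identifies [lam] with the average over
    [j < s0] of the images under [(T x S)^j] of its normalised restriction [mu]
    to the fiber over [y0]; the weights come out right because the number of
    [j < s0] with [S^j y0 = y] is [s0 * nu {y}].  The restriction [mu] is
    [T^s0]-invariant because [S^s0 y0 = y0].  Conversely such an average is
    invariant because its terms are [s0]-periodic in [j], and integrating a
    continuous [f] against it gives the integral against [mu] of the orbit
    average of [f], which is at least the infimum of that average. *)

(** * Borel measurability and continuity *)

Lemma continuous_borel_measurable {A B : ptopologicalType} {g : A -> B} :
  continuous g -> measurable_fun [set: borel A] (g : borel A -> borel B).
Proof.
move=> cg; have borelE : @measurable _ (borel B) = <<s @open B >> := erefl.
apply: (@measurability _ _ (borel A) (borel B) _ _ _ borelE) => _ [U oU <-].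
by apply: sub_sigma_algebra; rewrite setTI; exact: (proj1 (continuousP g) cg).
Qed.

Lemma continuous_borel_measurable_real {R : realType} {A : ptopologicalType}
  {g : A -> R} : continuous g -> measurable_fun [set: borel A] (g : borel A -> R).
Proof.
move=> cg; apply: (@measurability _ _ (borel A) R _ _ _ (RGenOpens.measurableE R)).
move=> _ [_ [a [b ->] <-]]; apply: sub_sigma_algebra; rewrite setTI.
by apply: (proj1 (continuousP g) cg); exact: interval_open.
Qed.

Lemma measurable_preimage_continuous {A B : ptopologicalType} {g : A -> B}
  {E : set (borel B)} :
  continuous g -> measurable E -> measurable (g @^-1` E : set (borel A)).
Proof. by move=> /continuous_borel_measurable/(_ measurableT E); rewrite setTI. Qed.

Lemma borel_measurable_set1 (Y : ptopologicalType) (y : Y) :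
  hausdorff_space Y -> measurable ([set y] : set (borel Y)).
Proof.
move=> hY; rewrite -(setCK [set y]); apply: measurableC; apply: sub_sigma_algebra.
exact/closed_openC/accessible_closed_set1/hausdorff_accessible.
Qed.

Section product_continuity.
Context {X Y : ptopologicalType}.

Lemma continuous_fst : continuous (@fst X Y).
Proof. by move=> z; exact: cvg_fst. Qed.

Lemma continuous_snd : continuous (@snd X Y).
Proof. by move=> z; exact: cvg_snd. Qed.

Lemma continuous_prodmap {T : X -> X} {S : Y -> Y} :
  continuous T -> continuous S -> continuous (prodmap T S).
Proof.
move=> cT cS z; apply: cvg_pair.
  exact: (continuous_comp (continuous_fst z) (cT z.1)).
exact: (continuous_comp (continuous_snd z) (cS z.2)).
Qed.

Lemma continuous_pairl (y : Y) : continuous (fun x : X => (x, y)).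
Proof. by move=> x; apply: cvg_pair; [exact: cvg_id | exact: cvg_cst]. Qed.

End product_continuity.

Lemma continuous_iter {U : topologicalType} {f : U -> U} (j : nat) :
  continuous f -> continuous (iter j f).
Proof.
move=> cf; elim: j => [|j IH] x /=; first exact: cvg_id.
exact: (continuous_comp (IH x) (cf _)).
Qed.

Lemma iter_prodmap (U V : Type) (f : U -> U) (g : V -> V) j z :
  iter j (prodmap f g) z = (iter j f z.1, iter j g z.2).
Proof. by elim: j => [|j IH]; [case: z | rewrite iterS IH]. Qed.

Lemma iter_inj (U : Type) (f : U -> U) j : injective f -> injective (iter j f).
Proof. by move=> fi; elim: j => [//|j IH] x y /= /fi/IH. Qed.

Lemma compact_continuous_bounded {R : realType} {Z : ptopologicalType}
  {f : Z -> R} : compact [set: Z] -> continuous f -> exists M, forall z, `|f z| <= M.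
Proof.
move=> cZ cf; have /compact_bounded [M [_ HM]] : compact (f @` setT).
  by apply: continuous_compact => //; exact: continuous_subspaceT.
by exists (`|M| + 1) => z; apply: HM => //; rewrite (le_lt_trans (ler_norm M)) ?ltrDl.
Qed.

(** * Probability measures *)

(** The library's measure instance on [pushforward m f] depends on a proof that
    [f] is measurable, which canonical-structure inference cannot supply. *)
Definition pushforward_measure {d d'} {T1 : measurableType d}
  {T2 : measurableType d'} {R : realType} (m : {measure set T1 -> \bar R})
  {f : T1 -> T2} (mf : measurable_fun [set: T1] f) : {measure set T2 -> \bar R} :=
  measure_function_pushforward__canonical__measure_function_Measure m mf.

Lemma mnormalizeE {d} {T : measurableType d} {R : realType}
  {m : {measure set T -> \bar R}} {P : probability T R} {A : set T} {c : R} :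
  m [set: T] = c%:E -> c != 0 -> mnormalize m P A = (m A * c^-1%:E)%E.
Proof. by move=> mc c0; rewrite /mnormalize mc eqe (negbTE c0). Qed.

Lemma invariant_iter {Z : ptopologicalType} {R : realType} {f : Z -> Z}
  {lam : Mprob Z R} (j : nat) {A : set (borel Z)} :
  continuous f -> is_invariant f lam -> measurable A ->
  lam (iter j f @^-1` A) = lam A.
Proof.
move=> cf finv; elim: j A => [//|j IH] A mA.
rewrite (_ : iter j.+1 f @^-1` A = iter j f @^-1` (f @^-1` A)) //.
by rewrite IH ?finv //; exact: measurable_preimage_continuous.
Qed.

Section bounded_integral.
Context {d} {T : measurableType d} {R : realType} (P : probability T R).

Lemma bounded_integrable (f : T -> R) (M : R) :
  measurable_fun [set: T] f -> (forall x, `|f x| <= M) ->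
  P.-integrable [set: T] (EFin \o f).
Proof.
move=> mf fM; apply: measurable_bounded_integrable => //.
  by rewrite (le_lt_trans (probability_le1 P measurableT)) ?ltry.
exists M; split; first exact: num_real.
by move=> N MN x _; apply: le_trans (fM x) _; exact: ltW.
Qed.

Lemma integral_addr_cst (f : T -> R) (M : R) :
  measurable_fun [set: T] f -> (forall x, `|f x| <= M) ->
  (\int[P]_x (f x + M)%:E = \int[P]_x (f x)%:E + M%:E)%E.
Proof.
move=> mf fM; under eq_integral do rewrite EFinD.
rewrite integralD //; last 2 first.
- exact: bounded_integrable fM.
- exact: finite_measure_integrable_cst.
by rewrite integral_cst // [X in (_ * X)%E]probability_setT mule1.
Qed.

Lemma ereal_inf_le_integral (g : T -> R) (M : R) :
  measurable_fun [set: T] g -> (forall x, `|g x| <= M) ->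
  (ereal_inf [set (g x)%:E | x in [set: T]] <= \int[P]_x (g x)%:E)%E.
Proof.
move=> mg gM; set m := ereal_inf _.
have m_ge : ((- M)%:E <= m)%E.
  apply: le_ereal_inf_tmp => _ [x _ <-].
  by rewrite lee_fin; have := gM x; rewrite ler_norml => /andP[].
have m_le x : (m <= (g x)%:E)%E by apply: ereal_inf_lbound; exists x.
have m_fin : m \is a fin_num.
  rewrite fin_numElt (lt_le_trans (ltNyr _) m_ge).
  exact: le_lt_trans (m_le point) (ltry _).
rewrite -(fineK m_fin) -[X in (X <= _)%E]mule1 -(probability_setT P) -integral_cst //.
apply: le_integral => //; first exact: finite_measure_integrable_cst.
  exact: bounded_integrable gM.
by move=> x _; rewrite /= fineK.
Qed.

End bounded_integral.

(** * The periodic orbit measure *)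

Section orbit_measure.
Context (R : realType) {Y : ptopologicalType} (S : Y -> Y) (y0 : Y) (s0 : nat).
Hypothesis s0_gt0 : (0 < s0)%N.
Local Notation nu := (orbit_measure R S y0 s0).

Definition orbit_fset : {fset Y} := [fset y | y in traject S y0 s0]%fset.

Lemma orbit_fsetP y :
  reflect (exists2 j, (j < s0)%N & y = iter j S y0) (y \in orbit_fset).
Proof. by rewrite in_fset; exact: trajectP. Qed.

Lemma mem_orbit_fset j : (j < s0)%N -> iter j S y0 \in orbit_fset.
Proof. by move=> js0; apply/orbit_fsetP; exists j. Qed.

Lemma orbit_measure_outside : nu (~` [set` orbit_fset]) = 0%E.
Proof.
rewrite /orbit_measure big1 ?mule0 // => j _.
by rewrite diracE memNset //= mem_orbit_fset.
Qed.

Lemma sum_along_orbit (G : Y -> \bar R) : (forall y, 0 <= G y)%E ->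
  \sum_(j < s0) G (iter j S y0) =
  (s0%:R%:E * \sum_(y <- orbit_fset) nu [set y] * G y)%E.
Proof.
move=> G0; have s0_neq0 : (s0%:R : R) != 0 by rewrite pnatr_eq0 -lt0n.
rewrite ge0_sume_distrr; last first.
  move=> y _; rewrite mule_ge0 // mule_ge0 ?lee_fin ?invr_ge0 //.
  by rewrite sume_ge0 // => j _; exact: measure_ge0.
under [RHS]eq_bigr => y _.
  rewrite /orbit_measure !muleA -EFinM mulfV // mul1e ge0_sume_distrl; last first.
    by move=> j _; exact: measure_ge0.
  over.
rewrite exchange_big /=; apply: eq_bigr => j _.
rewrite (bigD1_seq (iter j S y0)) ?fset_uniq ?mem_orbit_fset //= big1 ?adde0.
  by rewrite diracE mem_set // mul1e.
by move=> y yj; rewrite diracE memNset ?mul0e // => /esym/eqP; rewrite (negbTE yj).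
Qed.

End orbit_measure.

Lemma measurable_orbit_fset (Y : ptopologicalType) (S : Y -> Y) y0 s0 :
  hausdorff_space Y -> measurable ([set` orbit_fset S y0 s0] : set (borel Y)).
Proof.
move=> hY; rewrite -[X in measurable X]image_id -bigcup_imset1.
apply: fin_bigcup_measurable => [|y _]; first exact: finite_fset.
exact: borel_measurable_set1.
Qed.

(** * The fibers of an invariant measure over the orbit measure *)

Definition fiber_at {X Y : ptopologicalType} (y : Y) : set (borel (X * Y)%type) :=
  snd @^-1` [set y].

Lemma measurable_fiber_at (X : ptopologicalType) {Y : ptopologicalType} (y : Y) :
  hausdorff_space Y -> measurable (@fiber_at X Y y).
Proof.
move=> hY; apply: measurable_preimage_continuous; first exact: continuous_snd.
exact: borel_measurable_set1.
Qed.

Lemma preimage_iter_fiber_at (X Y : ptopologicalType) (T : X -> X) (S : Y -> Y)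
  j (y : Y) : injective S ->
  iter j (prodmap T S) @^-1` fiber_at (iter j S y) = @fiber_at X Y y.
Proof.
move=> Sinj; apply/seteqP; split => z; rewrite /fiber_at /= iter_prodmap /=.
  exact: iter_inj.
by move->.
Qed.

Section fiber_of_orbit_measure.
Context {R : realType} {X Y : pseudoPMetricType R} {T : X -> X} {S : Y -> Y}.
Hypotheses (cT : continuous T) (cS : continuous S) (Sinj : injective S)
  (hY : hausdorff_space Y).
Variables (y0 : Y) (s0 : nat).
Hypotheses (s0_gt0 : (0 < s0)%N) (hper : iter s0 S y0 = y0).
Variable lam : Mprob (X * Y)%type R.
Hypothesis lam_fiber : in_fiber T S (orbit_measure R S y0 s0) lam.

Local Notation F := (prodmap T S).
Local Notation E := (@fiber_at X Y).
Local Notation O := (orbit_fset S y0 s0).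
Let cF : continuous F := continuous_prodmap cT cS.
Let mE y : measurable (E y) := measurable_fiber_at X y hY.
Let lam_inv : is_invariant F lam := lam_fiber.1.
Let lam_marg : forall B : set (borel Y), measurable B ->
  pushf snd lam B = orbit_measure R S y0 s0 B := lam_fiber.2.

Lemma fiber_mass_iter j : lam (E (iter j S y0)) = lam (E y0).
Proof.
by rewrite -(invariant_iter j cF lam_inv (mE _)) preimage_iter_fiber_at.
Qed.

Lemma fiber_decomposition {B : set (borel (X * Y)%type)} : measurable B ->
  lam B = \sum_(y <- O) lam (B `&` E y).
Proof.
move=> mB; pose Orb : set (borel (X * Y)%type) := snd @^-1` [set` O].
have mOrb : measurable Orb.
  apply: measurable_preimage_continuous; first exact: continuous_snd.
  exact: measurable_orbit_fset.
have null : lam (B `\` Orb) = 0%E.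
  apply/eqP; rewrite eq_le measure_ge0 andbT -(orbit_measure_outside R S y0 s0).
  rewrite -lam_marg; last by apply: measurableC; exact: measurable_orbit_fset.
  apply: le_measure; try apply/mem_set.
  - exact: measurableD.
  - exact: measurableC mOrb.
  - by move=> z [].
rewrite (measureDI lam mB mOrb) [X in (X + _)%E]null add0e.
rewrite -measure_fbigsetU; last 2 first.
- by move=> y _; exact: measurableI.
- apply/trivIsetP => y y' _ _ yy'; apply/seteqP; split => // z [[_ zy] [_ zy']].
  by move: yy'; rewrite -zy -zy' eqxx.
congr (lam _); rewrite -bigcup_fset -setI_bigcupr /Orb.
congr (_ `&` _); apply/seteqP; split => [z Oz|z [y Oy]]; first by exists z.2.
by rewrite /fiber_at /= => ->.
Qed.

Lemma fiber_mass_neq0 : lam (E y0) != 0%E.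
Proof.
apply/eqP => c0; have := fiber_decomposition measurableT.
rewrite probability_setT big_seq big1 => [/eqP|y /orbit_fsetP [j _ ->]].
  by rewrite onee_eq0.
by rewrite setTI fiber_mass_iter.
Qed.

Lemma sum_fibers_along_orbit {B : set (borel (X * Y)%type)} : measurable B ->
  \sum_(j < s0) lam (B `&` E (iter j S y0)) = (s0%:R%:E * lam (E y0) * lam B)%E.
Proof.
move=> mB; rewrite (sum_along_orbit R S y0 _ s0_gt0 (fun y => lam (B `&` E y))).
  2: by move=> y; exact: measure_ge0.
rewrite -muleA (fiber_decomposition mB); congr (_ * _)%E.
rewrite ge0_sume_distrr; last by move=> y _; exact: measure_ge0.
rewrite big_seq_cond [RHS]big_seq_cond; apply: eq_bigr => y.
rewrite andbT => /orbit_fsetP [j _ ->].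
rewrite -lam_marg; last exact: borel_measurable_set1.
by rewrite /pushf fiber_mass_iter.
Qed.

(** [mnormalize] falls back on [\d_point] only for a measure of mass [0] or
    [+oo], which the fiber over [y0] is not (see [fiber_probE]). *)
Definition fiber_prob : Mprob X R :=
  mnormalize (pushforward_measure (mrestr lam (mE y0))
    (continuous_borel_measurable (@continuous_fst X Y))) (\d_(point : borel X)).

Lemma fiber_probE (A : set (borel X)) :
  fiber_prob A = (lam (fst @^-1` A `&` E y0) * (fine (lam (E y0)))^-1%:E)%E.
Proof.
have evidence : pushforward_measure (mrestr lam (mE y0))
    (continuous_borel_measurable (@continuous_fst X Y)) [set: borel X] =
    (fine (lam (E y0)))%:E.
  by rewrite /= /pushforward /mrestr preimage_setT setTI fineK ?fin_num_measure.
rewrite /fiber_prob /= (mnormalizeE evidence) // fine_eq0 ?fiber_mass_neq0 //.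
exact: fin_num_measure.
Qed.

Lemma fiber_prob_invariant : is_invariant (iter s0 T) fiber_prob.
Proof.
move=> A mA; rewrite !fiber_probE; congr (_ * _)%E.
have -> : fst @^-1` (iter s0 T @^-1` A) `&` E y0 =
    iter s0 F @^-1` (fst @^-1` A `&` E y0).
  rewrite preimage_setI -[in RHS]hper preimage_iter_fiber_at //; congr (_ `&` _).
  by apply/seteqP; split => z; rewrite /= iter_prodmap.
rewrite invariant_iter //; apply: measurableI (mE y0).
exact: measurable_preimage_continuous continuous_fst mA.
Qed.

Lemma fiber_prob_lift (B : set (borel (X * Y)%type)) : measurable B ->
  lam B = orbit_lift T S fiber_prob y0 s0 B.
Proof.
move=> mB; rewrite /orbit_lift /pushf /prod_dirac.
under eq_bigr => j _.
  rewrite fiber_probE.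
  have -> : fst @^-1` [set x | (iter j F @^-1` B) (x, y0)] `&` E y0 =
      iter j F @^-1` (B `&` E (iter j S y0)).
    rewrite preimage_setI preimage_iter_fiber_at //.
    apply/seteqP; split => -[x y]; rewrite /fiber_at /= => -[Bxy yy0];
      by subst y; split.
  rewrite invariant_iter //; last exact: measurableI (mE _).
  over.
rewrite -ge0_sume_distrl; last by move=> j _; exact: measure_ge0.
rewrite sum_fibers_along_orbit //.
have c_fin : lam (E y0) \is a fin_num by exact: fin_num_measure.
have B_fin : lam B \is a fin_num by exact: fin_num_measure.
have c_neq0 : fine (lam (E y0)) != 0 by rewrite fine_eq0 ?fiber_mass_neq0.
have s0_neq0 : (s0%:R : R) != 0 by rewrite pnatr_eq0 -lt0n.
rewrite -(fineK c_fin) -(fineK B_fin) /= -!EFinM; congr EFin.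
by field; rewrite s0_neq0 c_neq0.
Qed.

End fiber_of_orbit_measure.

(** * Averages over the orbit *)

Lemma sum_shift_periodic (V : nmodType) (n : nat) (a : nat -> V) :
  a n = a 0%N -> \sum_(j < n) a j.+1 = \sum_(j < n) a j.
Proof.
case: n => [|n] an; first by rewrite !big_ord0.
by rewrite big_ord_recr big_ord_recl /= an addrC.
Qed.

Section orbit_lift.
Context {R : realType} {X Y : pseudoPMetricType R} {T : X -> X} {S : Y -> Y}.
Hypotheses (cT : continuous T) (cS : continuous S).
Variables (y0 : Y) (s0 : nat).
Hypotheses (s0_gt0 : (0 < s0)%N) (hper : iter s0 S y0 = y0).
Variable mu : Mprob X R.

Local Notation F := (prodmap T S).
Local Notation lift := (orbit_lift T S (mu : set X -> \bar R) y0 s0).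

Lemma continuous_orbit_section j : continuous (fun x : X => iter j F (x, y0)).
Proof.
move=> x; apply: continuous_comp (continuous_pairl y0 x) _.
exact/continuous_iter/continuous_prodmap.
Qed.

Let msection j : measurable_fun [set: borel X]
    ((fun x => iter j F (x, y0)) : borel X -> borel (X * Y)%type) :=
  continuous_borel_measurable (continuous_orbit_section j).

Lemma orbit_lift_invariant (A : set (borel (X * Y)%type)) :
  is_invariant (iter s0 T) mu -> measurable A -> lift (F @^-1` A) = lift A.
Proof.
move=> mu_inv mA; rewrite /orbit_lift; congr (_ * _)%E.
apply: (@sum_shift_periodic _ s0 (fun j => mu [set x | A (iter j F (x, y0))])).
have -> : [set x | A (iter s0 F (x, y0))] = iter s0 T @^-1` [set x | A (x, y0)].
  by apply/seteqP; split => x; rewrite /= iter_prodmap /= hper.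
by rewrite mu_inv //; exact: measurable_preimage_continuous (continuous_pairl y0) mA.
Qed.

Lemma orbit_lift_marginal (B : set (borel Y)) :
  lift (snd @^-1` B) = orbit_measure R S y0 s0 B.
Proof.
rewrite /orbit_lift /orbit_measure; congr (_ * _)%E; apply: eq_bigr => j _.
rewrite /pushf /prod_dirac diracE.
have [Bj|Bj] := pselect (B (iter j S y0)).
  rewrite mem_set // (_ : [set x | _] = setT) ?probability_setT //.
  by apply/seteqP; split => x //= _; rewrite iter_prodmap.
rewrite memNset // (_ : [set x | _] = set0) ?measure0 //.
by apply/seteqP; split => x //=; rewrite iter_prodmap.
Qed.

Lemma orbit_lift_in_fiber (lam : Mprob (X * Y)%type R) :
  is_invariant (iter s0 T) mu ->
  (forall A, measurable A -> lam A = lift A) ->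
  in_fiber T S (orbit_measure R S y0 s0) lam.
Proof.
move=> mu_inv lamE; split => [A mA|B mB].
  rewrite !lamE ?orbit_lift_invariant //.
  exact: measurable_preimage_continuous (continuous_prodmap cT cS) mA.
rewrite /pushf lamE ?orbit_lift_marginal //.
exact: measurable_preimage_continuous continuous_snd mB.
Qed.

Definition lift_prob : Mprob (X * Y)%type R :=
  mnormalize (msum (fun j => pushforward_measure mu (msection j)) s0)
    (\d_(point : borel (X * Y)%type)).

Lemma lift_probE (A : set (borel (X * Y)%type)) : lift_prob A = lift A.
Proof.
have s0_neq0 : (s0%:R : R) != 0 by rewrite pnatr_eq0 -lt0n.
have evidence : msum (fun j => pushforward_measure mu (msection j)) s0
    [set: borel (X * Y)%type] = s0%:R%:E.
  rewrite /msum /= /pushforward.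
  under eq_bigr do rewrite preimage_setT probability_setT.
  by rewrite sumr_const card_ord EFin_natmul.
rewrite /lift_prob /= (mnormalizeE evidence) // muleC.
by rewrite /orbit_lift /msum /pushforward.
Qed.

Lemma orbit_lift_integral {lam : Mprob (X * Y)%type R} {h : X * Y -> \bar R} :
  (forall A, measurable A -> lam A = lift A) ->
  measurable_fun [set: borel (X * Y)%type] h -> (forall z, 0 <= h z)%E ->
  (\int[lam]_z h z = \int[mu]_x ((s0%:R^-1)%:E * \sum_(j < s0) h (iter j F (x, y0))))%E.
Proof.
move=> lamE mh h0; have k_ge0 : 0 <= (s0%:R : R)^-1 by rewrite invr_ge0.
pose k : {nonneg R} := NngNum k_ge0.
have mhj j : measurable_fun [set: borel X] (fun x => h (iter j F (x, y0))).
  exact: measurableT_comp mh (msection j).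
rewrite (eq_measure_integral
  (mscale k (msum (fun j => pushforward_measure mu (msection j)) s0))); last first.
  by move=> A mA _; exact: lamE.
rewrite ge0_integral_mscale //= ge0_integral_measure_sum //.
rewrite ge0_integralZl //; last 2 first.
- by apply: emeasurable_sum => j; exact: mhj.
- by move=> x _; apply: sume_ge0 => j _; exact: h0.
rewrite ge0_integral_sum //; congr (_ * _)%E; apply: eq_bigr => j _.
by rewrite ge0_integral_pushforward // preimage_setT.
Qed.

Definition orbit_average (f : X * Y -> R) (x : X) : R :=
  (s0%:R)^-1 * \sum_(j < s0) f (iter j T x, iter j S y0).

Section bounded_observable.
Context {f : X * Y -> R} {M : R}.
Hypotheses (cf : continuous f) (fM : forall z, `|f z| <= M).

Lemma measurable_orbit_average : measurable_fun [set: borel X] (orbit_average f).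
Proof.
apply: measurable_funM => //; apply: measurable_sum => j.
have -> : (fun x => f (iter j T x, iter j S y0)) = f \o (fun x => iter j F (x, y0)).
  by apply/funext => x; rewrite /= iter_prodmap.
exact: measurableT_comp (continuous_borel_measurable_real cf) (msection j).
Qed.

Lemma orbit_average_bounded x : `|orbit_average f x| <= M.
Proof.
have s0_gt0' : 0 < (s0%:R : R) by rewrite ltr0n.
rewrite /orbit_average normrM ger0_norm ?invr_ge0 // mulrC ler_pdivrMr // mulr_natr.
have -> : M *+ s0 = \sum_(j < s0) M by rewrite sumr_const card_ord.
by rewrite (le_trans (ler_norm_sum _ _ _)) // ler_sum.
Qed.

Lemma orbit_lift_integral_bounded {lam : Mprob (X * Y)%type R} :
  (forall A, measurable A -> lam A = lift A) ->
  (\int[lam]_z (f z)%:E = \int[mu]_x (orbit_average f x)%:E)%E.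
Proof.
move=> lamE; have mf := continuous_borel_measurable_real cf.
have shifted : (\int[lam]_z (f z)%:E + M%:E =
                 \int[mu]_x (orbit_average f x)%:E + M%:E)%E.
  rewrite -!integral_addr_cst //; last 2 first.
  - exact: measurable_orbit_average.
  - exact: orbit_average_bounded.
  rewrite (orbit_lift_integral lamE); last 2 first.
  - by apply/measurable_EFinP; apply: measurable_funD.
  - move=> z; rewrite lee_fin -lerBlDr sub0r.
    by have := fM z; rewrite ler_norml => /andP[].
  apply: eq_integral => x _; rewrite sumEFin -EFinM; congr EFin.
  rewrite big_split /= sumr_const card_ord mulrDr /orbit_average; congr (_ + _).
    by under eq_bigr do rewrite iter_prodmap.
  by rewrite -[M *+ s0]mulr_natl mulrA mulVf ?mul1r // pnatr_eq0 -lt0n.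
by have := congr1 (fun t => t - M%:E)%E shifted; rewrite !addeK.
Qed.

End bounded_observable.

Lemma orbit_lift_integral_ge {lam : Mprob (X * Y)%type R} {f : X * Y -> R} :
  compact [set: (X * Y)%type] -> continuous f ->
  (forall A, measurable A -> lam A = lift A) ->
  (ereal_inf [set (orbit_average f x)%:E | x in [set: X]] <=
   \int[lam]_z (f z)%:E)%E.
Proof.
move=> cXY cf lamE; have [M fM] := compact_continuous_bounded cXY cf.
rewrite (orbit_lift_integral_bounded cf fM lamE).
exact: ereal_inf_le_integral (measurable_orbit_average cf) (orbit_average_bounded fM).
Qed.

End orbit_lift.

Theorem lemma2p11 (R : realType) (X Y : pseudoPMetricType R)
  (T : X -> X) (S : Y -> Y) (hT : tds T) (hS : tds S)
  (y0 : Y) (s0 : nat) (hs0 : (0 < s0)%N) (hper : iter s0 S y0 = y0) :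
  let nu := orbit_measure R S y0 s0 in
  (* the fiber over nu is exactly the set of lifts 1/s0 sum_j (TxS)^j_*(mu x delta_{y0}) *)
  (forall lam : Mprob (X * Y)%type R,
     in_fiber T S nu lam <->
     exists mu : Mprob X R, is_invariant (iter s0 T) mu /\
       forall A : set (borel (X * Y)%type), measurable A ->
         lam A = orbit_lift T S (mu : set X -> \bar R) y0 s0 A) /\
  (* each such lift is a Borel probability measure on X x Y *)
  (forall mu : Mprob X R, is_invariant (iter s0 T) mu ->
     exists lam : Mprob (X * Y)%type R,
       forall A : set (borel (X * Y)%type), measurable A ->
         lam A = orbit_lift T S (mu : set X -> \bar R) y0 s0 A) /\
  (* consequence *)
  (forall f : X * Y -> R, continuous f ->
     (psi T S f nu >=
      ereal_inf [set ((s0%:R)^-1 * \sum_(j < s0) f (iter j T x, iter j S y0))%:E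
                | x in [set: X]])%E).
Proof.
move=> nu; have [cX [_ [cT _]]] := hT; have [cY [hY [cS [Sinv [_ [SK _]]]]]] := hS.
have Sinj : injective S := can_inj SK.
have cXY : compact [set: (X * Y)%type] by rewrite -setXTT; exact: compact_setX.
split; [|split].
- move=> lam; split => [lam_fiber|[mu [mu_inv lamE]]].
    exists (fiber_prob hY y0 lam); split.
      exact: fiber_prob_invariant cT cS Sinj hY y0 s0 hper lam lam_fiber.
    exact: fiber_prob_lift cT cS Sinj hY y0 s0 hs0 lam lam_fiber.
  exact: orbit_lift_in_fiber cT cS y0 s0 hper mu lam mu_inv lamE.
- move=> mu _; exists (lift_prob cT cS y0 s0 mu) => A _.
  exact: lift_probE cT cS y0 s0 hs0 mu A.
- move=> f cf; apply: le_ereal_inf_tmp => _ [lam lam_fiber <-].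
  apply: (orbit_lift_integral_ge cT cS y0 s0 hs0 _ cXY cf).
  exact: fiber_prob_lift cT cS Sinj hY y0 s0 hs0 lam lam_fiber.
Qed.
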